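(* Let $A\subseteq\mathbb{R}^2$ be a Lebesgue measurable set with $d^*(A)>0$, and let $\alpha>0$. Then there exist points $x,y,z\in A$ which form the vertices of a triangle of area $\alpha$.
   Context: $m$ is Lebesgue measure on $\mathbb{R}^2$ and $Q(x,t)$ is the closed axis-parallel square with centre $x$ and side length $t$. The upper Banach density is $d^*(A):=\limsup_{t\to\infty}\sup_{x\in\mathbb{R}^2}\frac{m(A\cap Q(x,t))}{m(Q(x,t))}$. *)

From HB Require Import structures.
From mathcomp Require Import all_boot all_order all_algebra.
From mathcomp Require Import all_classical all_reals all_analysis.
Set Implicit Arguments. Unset Strict Implicit. Unset Printing Implicit Defensive.
Import Order.TTheory GRing.Theory Num.Theory.
Import numFieldNormedType.Exports.
Local Open Scope classical_set_scope.
Local Open Scope ring_scope.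

Section Defs.
Context {R : realType}.

Definition plane := (measurableTypeR R * measurableTypeR R)%type.

Definition borel_m2 : set plane -> \bar R :=
  (lebesgue_measure \x lebesgue_measure)%E.

(* Lebesgue outer measure on R^2; on Lebesgue measurable sets it is
   the (complete) Lebesgue measure m *)
Definition lebesgue2 (A : set plane) : \bar R :=
  ereal_inf [set borel_m2 B | B in [set B | measurable B /\ A `<=` B]].

(* Lebesgue measurable = in the completion of the Borel product measure *)
Definition lebesgue2_measurable (A : set plane) : Prop :=
  exists B N : set plane, [/\ measurable B, measurable N, borel_m2 N = 0%E &
    (A `\` B) `|` (B `\` A) `<=` N].

Definition square (x : plane) (t : R) : set plane :=
  [set p | `|p.1 - x.1| <= t / 2 /\ `|p.2 - x.2| <= t / 2].

Definition dens_ratio (A : set plane) (x : plane) (t : R) : \bar R :=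
  (lebesgue2 (A `&` square x t) * ((fine (lebesgue2 (square x t)))^-1)%:E)%E.

Definition upper_banach_density (A : set plane) : \bar R :=
  ereal_inf [set ereal_sup [set r | exists x t, [/\ T <= t, 0 < t &
                                     r = dens_ratio A x t]] | T in [set: R]].

Definition triangle_area (x y z : plane) : R :=
  `|(y.1 - x.1) * (z.2 - x.2) - (z.1 - x.1) * (y.2 - x.2)| / 2.

End Defs.

(* A Borel subset of [A] of positive planar measure has, by Fubini, a vertical
   section {s | (c, s) \in A} of positive length, which by Steinhaus's theorem contains
   s and s + h for every small enough h > 0.  A set confined to a vertical strip has
   upper Banach density 0, so [A] also contains a point z arbitrarily far from the line
   x = c; choosing h = 2 alpha / |z.1 - c| gives a triangle of area alpha. *)

From mathcomp Require Import all_boot all_order all_algebra.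
From mathcomp Require Import all_classical all_reals all_analysis.
From mathcomp Require Import measurable_realfun lebesgue_integral_differentiation.
From mathcomp Require Import ring lra.
Set Implicit Arguments. Unset Strict Implicit. Unset Printing Implicit Defensive.
Import Order.TTheory GRing.Theory Num.Theory.
Import numFieldNormedType.Exports.
Local Open Scope classical_set_scope.
Local Open Scope ring_scope.

Section steinhaus.
Context {R : realType}.
Local Notation mu := (@lebesgue_measure R).
Local Notation RT := (measurableTypeR R).

Lemma measurable_fun_addr (a : R) : measurable_fun [set: RT] (fun x : RT => x + a).
Proof. exact: measurable_funD. Qed.

Lemma lebesgue_measure_translate (a : R) (A : set RT) : measurable A ->
  mu [set x | A (x + a)] = mu A.
Proof.
move=> mA.
pose f : RT -> RT := fun x => x + a.
pose nu := measure_function_pushforward__canonical__measure_function_Measure mu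
  (measurable_fun_addr a : measurable_fun setT f).
rewrite (lebesgue_measure_unique (mu := nu) _ mA)// => _ [[b c] _ <-].
rewrite /= /pushforward.
have -> : f @^-1` `]b, c]%classic = `](b - a), (c - a)]%classic.
  by apply/seteqP; split=> x /=; rewrite !in_itv/= ltrBlDr lerBrDr.
rewrite !lebesgue_measure_itv/= !lte_fin ltrD2r.
by case: ifP => // _; rewrite -!EFinD; congr EFin; ring.
Qed.

(* The ball is centred at a Lebesgue density point of [E]; [3/2 r] is 3/4 of its length. *)
Lemma lebesgue_measure_gt0_dense_ball (E : set RT) : measurable E -> (0 < mu E)%E ->
  exists y r, 0 < r /\ ((3 / 2 * r)%:E < mu (E `&` ball y r))%E.
Proof.
move=> mE E0; have [N [mN N0 densN]] := lebesgue_density mE.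
have [y Ey Ny] : exists2 y, E y & ~ N y.
  apply: contrapT => noy; move: E0.
  rewrite (subset_measure0 mE mN _ N0) ?ltxx// => x Ex.
  by apply: contrapT => Nx; apply: noy; exists x.
have : (mu (E `&` ball y r) * (mu (ball y r))^-1)%E @[r --> 0^'+] --> (\1_E y)%:E.
  by apply: contrapT => /densN.
have lt341 : 3 / 4 < 1 :> R by lra.
rewrite indicE mem_set// => /(_ _ (@nbhs_open_ereal_gt R 1 (fun=> 3 / 4) lt341)).
move=> near_dense.
have [r [/= r0 dense_r]] := filter_ex (filterI (nbhs_right_gt 0) near_dense).
exists y, r; split => //; move: dense_r => /=.
rewrite lebesgue_measure_ball ?ltW// inver mulrn_eq0/= gt_eqF// lte_pdivlMr.
  by rewrite -EFinM; apply: le_lt_trans; rewrite lee_fin -mulr_natl; lra.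
by rewrite mulrn_wgt0.
Qed.

(* Steinhaus: if [E] filled [ball y r] to more than 3/4 while missing every gap [a],
   then [E `&` ball y r] and its translate by [a] would be disjoint inside a ball of
   length [2 (r + a) < 3 r]. *)
Lemma steinhaus (E : set RT) : measurable E -> (0 < mu E)%E ->
  exists2 eta : R, 0 < eta & forall a, 0 < a -> a < eta -> exists s, E s /\ E (s + a).
Proof.
move=> mE E0; have [y [r [r0 denseE]]] := lebesgue_measure_gt0_dense_ball mE E0.
exists (r / 2) => [|a a0 ar]; first lra.
apply: contrapT => no_gap.
set F := E `&` ball y r in denseE.
have mF : measurable F by apply: measurableI => //; exact: measurable_ball.
pose G := [set x : RT | F (x - a)].
have mG : measurable G by rewrite -[G]setTI; exact: measurable_fun_addr.
have FG0 : F `&` G = set0.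
  apply/seteqP; split => // x [[Ex _] [Exa _]]; apply: no_gap.
  by exists (x - a); rewrite subrK.
have FG_ball : F `|` G `<=` ball y (r + a).
  move=> x [[_]|[_]]; rewrite -!ball_normE /ball_ /=; first lra.
  have := ler_normD (y - (x - a)) (- a).
  by rewrite normrN (gtr0_norm a0) (_ : y - (x - a) + - a = y - x); [lra|ring].
have : (mu F + mu F <= ((r + a) *+ 2)%:E)%E.
  rewrite -{2}(lebesgue_measure_translate (- a) mF) -measureU//.
  rewrite -(lebesgue_measure_ball y); last lra.
  by apply: le_measure => //; rewrite inE; [exact: measurableU|exact: measurable_ball].
apply/negP; rewrite -ltNge; apply: le_lt_trans (lteD denseE denseE).
by rewrite -EFinD lee_fin -mulr_natl; lra.
Qed.

End steinhaus.

Section plane.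
Context {R : realType}.
Local Notation mu := (@lebesgue_measure R).
Local Notation P := (@plane R).

Lemma borel_m2_gt0_xsection (B : set P) : measurable B -> (0 < borel_m2 B)%E ->
  exists c, (0 < mu (xsection B c))%E.
Proof.
move=> mB B0; apply: contrapT => no_c; move: B0.
suff -> : borel_m2 B = 0%E by rewrite ltxx.
rewrite /borel_m2 /product_measure1; apply: integral0_eq => x _ /=.
apply/eqP; rewrite eq_le measure_ge0 andbT leNgt; apply/negP => x0.
by apply: no_c; exists x.
Qed.

Lemma lebesgue_measure_itvcc (a b : R) : a <= b -> mu `[a, b]%classic = (b - a)%:E.
Proof.
move=> ab; rewrite lebesgue_measure_itv/= lte_fin; case: ltP => [_|ba].
  by rewrite -EFinD.
have -> : b = a by apply/le_anti; rewrite ba ab.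
by rewrite subrr.
Qed.

Lemma borel_m2_setX_itvcc (a b c d : R) : a <= b -> c <= d ->
  borel_m2 (`[a, b]%classic `*` `[c, d]%classic) = ((b - a) * (d - c))%:E.
Proof.
move=> ab cd; rewrite /borel_m2 product_measure1E //.
change (mu `[a, b]%classic * mu `[c, d]%classic = ((b - a) * (d - c))%:E)%E.
by rewrite !lebesgue_measure_itvcc // -EFinM.
Qed.

Lemma lebesgue2_le_borel_m2 (A B : set P) : measurable B -> A `<=` B ->
  (lebesgue2 A <= borel_m2 B)%E.
Proof. by move=> mB AB; apply: ereal_inf_lbound; exists B. Qed.

Lemma lebesgue2_ge0 (A : set P) : (0 <= lebesgue2 A)%E.
Proof. by apply/ereal_infP => _ [B _ <-]; exact: measure_ge0. Qed.

Lemma lebesgue2E (Q : set P) : measurable Q -> lebesgue2 Q = borel_m2 Q.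
Proof.
move=> mQ; apply/eqP; rewrite eq_le lebesgue2_le_borel_m2 //=.
by apply/ereal_infP => _ [B [mB QB] <-]; apply: le_measure; rewrite ?inE.
Qed.

Lemma square_setX (x : P) (t : R) : square x t =
  `[x.1 - t / 2, x.1 + t / 2]%classic `*` `[x.2 - t / 2, x.2 + t / 2]%classic.
Proof. by apply/seteqP; split => p /=; rewrite !in_itv/= -!ler_distl. Qed.

Lemma lebesgue2_square (x : P) (t : R) : 0 < t -> lebesgue2 (square x t) = (t * t)%:E.
Proof.
move=> t0; rewrite square_setX lebesgue2E; last first.
  by apply: measurableX; exact: measurable_itv.
by rewrite borel_m2_setX_itvcc; [congr EFin; field|lra|lra].
Qed.

Lemma dens_ratio_strip (A : set P) (c M : R) (x : P) (t : R) : 0 < t -> 0 <= M ->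
  (forall p, A p -> `|p.1 - c| <= M) -> (dens_ratio A x t <= (M *+ 2 / t)%:E)%E.
Proof.
move=> t0 M0 A_strip; rewrite /dens_ratio lebesgue2_square //=.
have : (lebesgue2 (A `&` square x t) <= (M *+ 2 * t)%:E)%E.
  have -> : (M *+ 2 * t)%:E =
      borel_m2 (`[c - M, c + M]%classic `*` `[x.2 - t / 2, x.2 + t / 2]%classic).
    by rewrite borel_m2_setX_itvcc; [congr EFin; rewrite -mulr_natl; field|lra|lra].
  apply: lebesgue2_le_borel_m2; first by apply: measurableX; exact: measurable_itv.
  move=> p [Ap]; rewrite square_setX => -[_ p2]; split => //=.
  by rewrite in_itv/= -ler_distl A_strip.
move=> /lee_wpmul2r bound; apply: le_trans (bound _ _) _.
  by rewrite lee_fin invr_ge0 ltW ?mulr_gt0.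
by rewrite -EFinM lee_fin (_ : _ * _^-1 = M *+ 2 / t) //; field; lra.
Qed.

Lemma upper_banach_density_le (A : set P) (T : R) (b : \bar R) :
  (forall x t, T <= t -> 0 < t -> (dens_ratio A x t <= b)%E) ->
  (upper_banach_density A <= b)%E.
Proof.
move=> ratio_le; apply: le_trans (ereal_inf_lbound _) _; first by exists T.
by apply: ge_ereal_sup => _ [x [t [Tt t0 ->]]]; exact: ratio_le.
Qed.

Lemma upper_banach_density_strip (A : set P) (c M : R) : 0 <= M ->
  (forall p, A p -> `|p.1 - c| <= M) -> (upper_banach_density A <= 0)%E.
Proof.
move=> M0 A_strip; apply/lee_addgt0Pr => e e0; rewrite add0e.
apply: (@upper_banach_density_le _ ((M *+ 2 + 1) / e)) => x t Tt t0.
apply: le_trans (dens_ratio_strip x t0 M0 A_strip) _.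
rewrite lee_fin ler_pdivrMr//; rewrite ler_pdivrMr// in Tt.
by rewrite -mulr_natl in Tt *; lra.
Qed.

Lemma upper_banach_density_gt0_unbounded (A : set P) (c M : R) :
  (0 < upper_banach_density A)%E -> exists2 z, A z & M < `|z.1 - c|.
Proof.
move=> A0; apply: contrapT => no_z; move: A0; rewrite ltNge.
apply/negP/negPn; apply: (@upper_banach_density_strip _ c `|M|) => // p Ap.
rewrite (le_trans _ (ler_norm M)) // leNgt; apply/negP => Mp.
by apply: no_z; exists p.
Qed.

Lemma lebesgue2_measurable_gt0_subset (A : set P) : lebesgue2_measurable A ->
  (0 < upper_banach_density A)%E ->
  exists B, [/\ measurable B, B `<=` A & (0 < borel_m2 B)%E].
Proof.
move=> [B [N [mB mN N0 BAN]]] A0.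
have mBN : measurable (B `\` N) by apply: measurableD.
exists (B `\` N); split => //.
  move=> p [Bp Np]; apply: contrapT => Ap; apply: Np; apply: BAN; right; by split.
rewrite lt_def measure_ge0 andbT; apply/negP => /eqP BN0; move: A0.
rewrite ltNge; apply/negP/negPn; apply: (@upper_banach_density_le _ 0) => x t _ _.
suff null : lebesgue2 (A `&` square x t) = 0%E by rewrite /dens_ratio null mul0e.
apply/eqP; rewrite eq_le lebesgue2_ge0 andbT.
apply: (@le_trans _ _ (borel_m2 (B `\` N `|` N))).
  apply: lebesgue2_le_borel_m2; first exact: measurableU.
  move=> p [Ap _]; have [Np|Np] := pselect (N p); [by right|left; split => //].
  by apply: contrapT => Bp; apply: Np; apply: BAN; left.
have : (borel_m2 (B `\` N `|` N) <= borel_m2 (B `\` N) + borel_m2 N)%E.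
  exact: measureU2.
by rewrite BN0 N0 adde0.
Qed.

Lemma triangle_area_vertical (c s h : R) (z : P) :
  triangle_area ((c, s) : P) (c, s + h) z = `|h| * `|z.1 - c| / 2.
Proof.
rewrite /triangle_area /= (_ : _ - _ = - ((z.1 - c) * h)); last by ring.
by rewrite normrN normrM (mulrC `|_|).
Qed.

End plane.

Theorem corollary1p8 (R : realType) (A : set (@plane R)) (alpha : R) :
  lebesgue2_measurable A ->
  (0 < upper_banach_density A)%E ->
  0 < alpha ->
  exists x y z, [/\ A x, A y, A z & triangle_area x y z = alpha].
Proof.
move=> mA A0 alpha0.
have [B [mB BA B0]] := lebesgue2_measurable_gt0_subset mA A0.
have [c c0] := borel_m2_gt0_xsection mB B0.
have [eta eta0 gaps] := steinhaus (measurable_xsection c mB) c0.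
have [z Az far_z] := upper_banach_density_gt0_unbounded c (2 * alpha / eta) A0.
set D := `|z.1 - c| in far_z.
have D0 : 0 < D by apply: lt_trans far_z; rewrite divr_gt0 ?mulr_gt0.
have [s []] : exists s, xsection B c s /\ xsection B c (s + 2 * alpha / D).
  apply: gaps; first by rewrite divr_gt0 ?mulr_gt0.
  by rewrite ltr_pdivrMr // (mulrC eta) -ltr_pdivrMr.
rewrite /xsection /= !inE => /BA Acs /BA Acsh.
exists (c, s), (c, s + 2 * alpha / D), z; split => //.
rewrite triangle_area_vertical ger0_norm ?divr_ge0 ?mulr_ge0 ?ltW //.
by rewrite -/D; field; rewrite gt_eqF.
Qed.
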